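(* Let $H_0\in\mathbb{C}^{n\times n}$ be a Hermitian positive-semidefinite matrix. Then $H_0$ is isotropic, i.e. $H_0 H_0^T = 0_{n\times n}$, if and only if there exist a complex orthogonal matrix $R\in\mathbb{C}^{n\times n}$ ($R R^T = R^T R = \mathbb{I}_n$), an integer $m\ge 1$, and a matrix $O\in\mathbb{C}^{m\times n}$ with $O O^T = 0_{m\times m}$, such that $H_0 = R^\dagger O^\dagger O R$.
   Context: $^T$ denotes transpose (no conjugation), $^\dagger$ conjugate transpose, $\mathbb{I}_n$ the $n\times n$ identity. *)

From HB Require Import structures.
From mathcomp Require Import all_boot all_order all_algebra.
Set Implicit Arguments. Unset Strict Implicit. Unset Printing Implicit Defensive.
Import Order.TTheory GRing.Theory Num.Theory.
Local Open Scope ring_scope.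

Definition ctrmx (C : numClosedFieldType) (m n : nat) (A : 'M[C]_(m, n)) :
  'M[C]_(n, m) := (map_mx Num.conj A)^T.

Definition hermitian_mx (C : numClosedFieldType) (n : nat) (H : 'M[C]_n) : Prop :=
  ctrmx H = H.

(* Hermitian positive semidefinite: Hermitian and v^dagger H v >= 0 for every
   column vector v (the order on C: 0 <= z means z is real and nonnegative). *)
Definition hermitian_psd (C : numClosedFieldType) (n : nat) (H : 'M[C]_n) : Prop :=
  hermitian_mx H /\ forall v : 'cV[C]_n, 0 <= (ctrmx v *m H *m v) 0 0.

Definition complex_orthogonal (C : numClosedFieldType) (n : nat) (R : 'M[C]_n) : Prop :=
  R *m R^T = 1%:M /\ R^T *m R = 1%:M.

From HB Require Import structures.
From mathcomp Require Import all_boot all_order all_algebra.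
From mathcomp Require Import sesquilinear spectral.
Import Order.TTheory GRing.Theory Num.Theory.
Local Open Scope ring_scope.

(* A positive-semidefinite Hermitian matrix is a Gram matrix L^† L.  Since
   L^† L Z = 0 forces L Z = 0, isotropy L^† L L^T conj(L) = 0 of H = L^† L
   peels off twice (once after transposing) to L L^T = 0, so O = L (padded by
   a zero row so that m >= 1) and R = 1 work.  Conversely R R^T = 1 and
   O O^T = 0 make the product H H^T collapse to 0. *)

Section ConjugateTranspose.
Variable C : numClosedFieldType.

Lemma ctrmx_mul m n p (A : 'M[C]_(m, n)) (B : 'M[C]_(n, p)) :
  ctrmx (A *m B) = ctrmx B *m ctrmx A.
Proof. by rewrite /ctrmx map_mxM trmx_mul. Qed.

Lemma trmx_ctrmx m n (A : 'M[C]_(m, n)) : (ctrmx A)^T = map_mx Num.conj A.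
Proof. by rewrite /ctrmx trmxK. Qed.

Lemma ctrmx1 n : ctrmx (1%:M : 'M[C]_n) = 1%:M.
Proof. by rewrite /ctrmx map_mx1 trmx1. Qed.

Lemma ctrmxK m n (A : 'M[C]_(m, n)) : ctrmx (ctrmx A) = A.
Proof. by apply/matrixP => i j; rewrite /ctrmx !mxE conjCK. Qed.

Lemma ctrmxE m n (A : 'M[C]_(m, n)) : ctrmx A = (A ^t* )%sesqui.
Proof. by apply/matrixP => i j; rewrite /ctrmx !mxE. Qed.

(* The diagonal entries of A^† A are the squared column norms of A. *)
Lemma gram_eq0 m n (A : 'M[C]_(m, n)) : ctrmx A *m A = 0 -> A = 0.
Proof.
move=> /matrixP AA0; apply/matrixP => i j; rewrite mxE.
have := AA0 j j; rewrite !mxE => sum_eq0.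
have ge0 (k : 'I_m) : true -> 0 <= ctrmx A j k * A k j.
  by rewrite /ctrmx !mxE mulrC mul_conjC_ge0.
have := psumr_eq0P ge0 sum_eq0 (i := i) isT.
by rewrite /ctrmx !mxE mulrC => /eqP; rewrite mul_conjC_eq0 => /eqP.
Qed.

Lemma gram_mulmx_eq0 m n p (L : 'M[C]_(m, n)) (Z : 'M[C]_(n, p)) :
  ctrmx L *m L *m Z = 0 -> L *m Z = 0.
Proof.
move=> LLZ0; apply: gram_eq0.
by rewrite ctrmx_mul -!mulmxA (mulmxA (ctrmx L)) LLZ0 mulmx0.
Qed.

End ConjugateTranspose.

Section PsdFactorization.
Context {C : numClosedFieldType} {n : nat} {H : 'M[C]_n}.
Hypothesis H_psd : hermitian_psd H.

Let P := spectralmx H.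
Let d := spectral_diag H.

Lemma psd_spectral_decomposition : H = ctrmx P *m diag_mx d *m P.
Proof.
have H_normal : H \is normalmx.
  by apply/normalmxP; rewrite -ctrmxE H_psd.1.
by rewrite (orthomx_spectralP H_normal) invmx_unitary ?spectral_unitarymx ?ctrmxE.
Qed.

(* Evaluate the quadratic form of H at the i-th eigenvector P^† e_i. *)
Lemma psd_spectral_diag_ge0 i : 0 <= d 0 i.
Proof.
have PPt : P *m ctrmx P = 1%:M.
  by rewrite ctrmxE; apply/unitarymxP; apply: spectral_unitarymx.
have := H_psd.2 (ctrmx P *m delta_mx i 0).
rewrite ctrmx_mul ctrmxK psd_spectral_decomposition !mulmxA.
rewrite -(mulmxA _ P) PPt mulmx1 -(mulmxA _ P) PPt mulmx1.
rewrite !mxE (bigD1 i) //= big1 ?addr0 => [|k /negbTE ki]; last first.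
  by rewrite !mxE ki mulr0.
rewrite !mxE (bigD1 i) //= big1 ?addr0 => [|k /negbTE ki]; last first.
  by rewrite !mxE ki mulr0n mulr0.
by rewrite !mxE !eqxx conjC1 mulr1n mul1r mulr1.
Qed.

Lemma psd_gram_factor : exists L : 'M[C]_n, H = ctrmx L *m L.
Proof.
exists (diag_mx (map_mx sqrtC d) *m P).
rewrite {1}psd_spectral_decomposition ctrmx_mul !mulmxA; congr (_ *m P).
rewrite -mulmxA; congr (_ *m _).
apply/matrixP => i j; rewrite !mxE (bigD1 j) //= big1 ?addr0 => [|k /negbTE kj].
  rewrite !mxE eqxx mulr1n.
  have [->|ij] := eqVneq i j; last by rewrite !mulr0n rmorph0 mul0r.
  rewrite !mulr1n conj_Creal ?ger0_real ?sqrtC_ge0 ?psd_spectral_diag_ge0 //.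
  by rewrite -expr2 sqrtCK.
by rewrite !mxE kj mulr0n mulr0.
Qed.

End PsdFactorization.

Section Isotropy.
Variable C : numClosedFieldType.

Lemma gram_isotropic m n (L : 'M[C]_(m, n)) :
  (ctrmx L *m L) *m (ctrmx L *m L)^T = 0 -> L *m L^T = 0.
Proof.
move=> HH0; apply: gram_mulmx_eq0.
have LLtLc0 : L *m (L^T *m map_mx Num.conj L) = 0.
  by apply: gram_mulmx_eq0; rewrite -HH0 trmx_mul trmx_ctrmx !mulmxA.
by have := congr1 trmx LLtLc0; rewrite trmx0 !trmx_mul trmxK => <-.
Qed.

Lemma gram_congruence_isotropic m n p (O : 'M[C]_(m, n)) (R : 'M[C]_(n, p)) :
  R *m R^T = 1%:M -> O *m O^T = 0 ->
  (ctrmx R *m ctrmx O *m O *m R) *m (ctrmx R *m ctrmx O *m O *m R)^T = 0.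
Proof.
move=> RRt OOt; rewrite !trmx_mul !trmx_ctrmx !mulmxA.
by rewrite -(mulmxA _ R) RRt mulmx1 -(mulmxA _ O) OOt mulmx0 !mul0mx.
Qed.

Lemma gram_col_mx0 m n (L : 'M[C]_(m, n)) :
  ctrmx (col_mx (0 : 'M[C]_(1, n)) L) *m col_mx 0 L = ctrmx L *m L.
Proof.
by rewrite /ctrmx map_col_mx tr_col_mx mul_row_col map_mx0 trmx0 mul0mx add0r.
Qed.

Lemma isotropic_col_mx0 m n (L : 'M[C]_(m, n)) :
  L *m L^T = 0 ->
  col_mx (0 : 'M[C]_(1, n)) L *m (col_mx (0 : 'M[C]_(1, n)) L)^T = 0.
Proof.
by move=> LLt0; rewrite tr_col_mx mul_col_row LLt0 !mul0mx trmx0 mulmx0 block_mx0.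
Qed.

End Isotropy.

Theorem theorem2 (C : numClosedFieldType) (n : nat) (H0 : 'M[C]_n) :
  hermitian_psd H0 ->
  (H0 *m H0^T = 0 <->
   exists (R : 'M[C]_n) (m : nat) (O : 'M[C]_(m, n)),
     [/\ complex_orthogonal R, (1 <= m)%N, O *m O^T = 0 &
         H0 = ctrmx R *m ctrmx O *m O *m R]).
Proof.
move=> H0_psd; split => [H0H0t0 | [R [m [O [[RRt _] _ OOt ->]]]]].
- have [L H0E] := psd_gram_factor H0_psd.
  have LLt0 : L *m L^T = 0 by apply: gram_isotropic; rewrite -H0E.
  exists 1%:M, n.+1, (col_mx (0 : 'M_(1, n)) L); split => //.
  + by rewrite /complex_orthogonal trmx1 mulmx1.
  + exact: isotropic_col_mx0.
  + by rewrite ctrmx1 mul1mx mulmx1 gram_col_mx0.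
- exact: gram_congruence_isotropic.
Qed.
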